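(* Let $s,a,\sigma$ be positive integers, let $X$ be a set of cardinality $s$, and let $\pi_1,\ldots,\pi_\sigma$ be partitions of $X$ such that every part of every $\pi_i$ has cardinality at least $a$. Then there exists a subset $Y\subseteq X$ with $|Y|\ge s(1-1/a)^\sigma$ such that $Y$ contains no part of $\pi_i$ for any $i\in\{1,\ldots,\sigma\}$. *)

From mathcomp Require Import all_boot all_order all_algebra.
Set Implicit Arguments. Unset Strict Implicit. Unset Printing Implicit Defensive.

From mathcomp Require Import all_boot all_order all_algebra.
Import Order.TTheory GRing.Theory Num.Theory.

(* Treat the partitions one at a time.  Removing from the current set Y one
   point of each block contained in Y destroys all these blocks; since they are
   disjoint and have at least a points each, there are at most |Y|/a of them,
   so at least a fraction 1 - 1/a of Y survives.  Blocks not contained in Y are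
   not contained in any subset of Y, so earlier partitions stay destroyed. *)

Section AvoidingBlocks.

Variables (T : finType) (a : nat).
Hypothesis a_gt0 : 0 < a.

Section OneFamily.

Variable P : {set {set T}}.
Hypotheses (tiP : trivIset P) (P_big : {in P, forall B : {set T}, a <= #|B|}).

Lemma leq_card_blocks_sub (Y : {set T}) : a * #|[set B in P | B \subset Y]| <= #|Y|.
Proof.
set Q := [set B in P | B \subset Y].
have QP B : B \in Q -> B \in P by rewrite inE => /andP[].
apply: (@leq_trans #|cover Q|); last first.
  by apply/subset_leq_card/bigcupsP => B; rewrite inE => /andP[].
have /eqP <- : trivIset Q by apply: trivIsetS tiP; apply/subsetP.
by rewrite mulnC -sum_nat_const; apply: leq_sum => B /QP /P_big.
Qed.

Lemma exists_subset_avoiding_blocks (Y : {set T}) :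
  exists Y' : {set T}, [/\ Y' \subset Y, (a - 1) * #|Y| <= a * #|Y'|
                         & {in P, forall B : {set T}, ~~ (B \subset Y')}].
Proof.
set Q := [set B in P | B \subset Y].
have QP B : B \in Q -> B \in P by rewrite inE => /andP[].
have partQ : partition Q (cover Q).
  rewrite /partition eqxx (trivIsetS _ tiP) ?andTb; last exact/subsetP.
  by apply: contraTN a_gt0 => /QP /P_big; rewrite cards0 leqn0 => /eqP ->.
have trX := transversalP partQ; set X := transversal Q (cover Q) in trX.
have sXY : X \subset Y.
  apply: subset_trans (transversal_sub trX) _.
  by apply/bigcupsP => B; rewrite inE => /andP[].
exists (Y :\: X); split; first exact: subsetDl.
- rewrite cardsDS // (card_transversal trX) mulnBr mulnBl mul1n.
  by rewrite leq_sub2l // leq_card_blocks_sub.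
- move=> B PB; apply/negP => sBYX.
  have QB : B \in Q by rewrite inE PB (subset_trans sBYX (subsetDl _ _)).
  have /cards1P[x XBx] : #|X :&: B| == 1 by case/and3P: trX => _ _ /forall_inP->.
  have /setIP[Xx /(subsetP sBYX)] : x \in X :&: B by rewrite XBx set11.
  by rewrite inE Xx.
Qed.

End OneFamily.

Lemma exists_subset_avoiding_families (Ps : seq {set {set T}}) (Y : {set T}) :
  {in Ps, forall P : {set {set T}}, trivIset P} ->
  {in Ps, forall P : {set {set T}}, {in P, forall B : {set T}, a <= #|B|}} ->
  exists Y' : {set T},
    [/\ Y' \subset Y, (a - 1) ^ size Ps * #|Y| <= a ^ size Ps * #|Y'|
      & {in Ps, forall P : {set {set T}}, {in P, forall B : {set T}, ~~ (B \subset Y')}}].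
Proof.
elim: Ps => [|P Ps IH] tiPs Ps_big; first by exists Y; rewrite !mul1n.
have sPs : {subset Ps <= P :: Ps} by move=> Q Qs; rewrite inE Qs orbT.
have [Y1 [sY1Y leY1 avoidY1]] := IH (sub_in1 sPs tiPs) (sub_in1 sPs Ps_big).
have [Y2 [sY21 leY2 avoidY2]] :=
  exists_subset_avoiding_blocks P (tiPs P (mem_head _ _)) (Ps_big P (mem_head _ _)) Y1.
exists Y2; split; first exact: subset_trans sY21 sY1Y.
- rewrite /= !expnS -!mulnA (leq_trans (leq_mul (leqnn _) leY1)) //.
  by rewrite mulnCA [leqRHS]mulnCA leq_mul2l leY2 orbT.
- move=> Q; rewrite inE => /predU1P[-> //|Qs] B QB.
  by apply: contra (avoidY1 Q Qs B QB) => /subset_trans; apply.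
Qed.

End AvoidingBlocks.

Theorem lemma2p7 (T : finType) (s a sigma : nat)
    (hs : (0 < s)%N) (ha : (0 < a)%N) (hsigma : (0 < sigma)%N)
    (X : {set T}) (hX : #|X| = s)
    (pi : 'I_sigma -> {set {set T}})
    (hpart : forall i, partition (pi i) X)
    (hsize : forall i B, B \in pi i -> (a <= #|B|)%N) :
  exists Y : {set T},
    [/\ Y \subset X,
        (s%:R * (1 - 1 / a%:R) ^+ sigma <= (#|Y|%:R : rat))%R
      & forall i B, B \in pi i -> ~~ (B \subset Y)].
Proof.
set Ps := [seq pi i | i <- enum 'I_sigma].
have [||Y [sYX leY avoidY]] := @exists_subset_avoiding_families T a ha Ps X.
- by move=> P /mapP[i _ ->]; apply: partition_trivIset (hpart i).
- by move=> P /mapP[i _ ->]; apply: hsize.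
exists Y; split=> // [|i B]; last by apply: avoidY; rewrite map_f ?mem_enum.
have a_pos : (0 < a%:R :> rat)%R by rewrite ltr0n.
rewrite size_map size_enum_ord hX -(ler_nat rat) !natrM !natrX in leY.
have -> : (1 - 1 / a%:R = (a - 1)%:R / a%:R :> rat)%R.
  by rewrite natrB // mulrBl divff ?mul1r // lt0r_neq0.
rewrite expr_div_n mulrA ler_pdivrMr ?exprn_gt0 //.
by rewrite mulrC [leRHS]mulrC.
Qed.
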